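(* For every finite simple graph $G$, $\mathrm{box}(G)=\mathrm{box}(CC(G))$.
   Context: An axis-parallel $t$-dimensional box is a Cartesian product $R_1\times\cdots\times R_t$ of closed real intervals $R_i=[a_i,b_i]$. The boxicity $\mathrm{box}(G)$ of a graph $G$ is the minimum integer $t$ such that $G$ is the intersection graph of axis-parallel $t$-dimensional boxes, i.e. there is a map $f$ from $V(G)$ to $t$-dimensional boxes with $(u,v)\in E(G)\iff f(u)\cap f(v)\neq\emptyset$ for distinct $u,v$. A critical clique of $G$ is a maximal clique of $G$ all of whose vertices have the same (closed) neighbourhood in $G$. The critical clique graph $CC(G)$ has one vertex for each critical clique of $G$, two such vertices being adjacent iff the union of the two corresponding critical cliques induces a clique in $G$. *)

From Stdlib Require Import Reals ClassicalEpsilon.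
From mathcomp Require Import all_boot.

Set Implicit Arguments.
Unset Strict Implicit.
Unset Printing Implicit Defensive.

(* A finite simple graph is a finType T with a symmetric irreflexive
   adjacency relation e : rel T. *)

Definition box_rep (T : finType) (e : rel T) (t : nat) : Prop :=
  exists (a b : T -> 'I_t -> R),
    (forall u i, Rle (a u i) (b u i)) /\
    (forall u v : T, u != v ->
       (e u v <->
        exists x : 'I_t -> R, forall i,
          (Rle (a u i) (x i) /\ Rle (x i) (b u i)) /\
          (Rle (a v i) (x i) /\ Rle (x i) (b v i)))).

Definition box_repb (T : finType) (e : rel T) : pred nat :=
  fun t => if excluded_middle_informative (box_rep e t) then true else false.

(* box(G) = the minimum t admitting a representation (0 if none exists,
   which never happens for finite graphs). *)
Definition boxicity (T : finType) (e : rel T) : nat :=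
  match excluded_middle_informative (exists t, box_repb e t) with
  | left h => ex_minn h
  | right _ => 0
  end.

Definition cnbhd (T : finType) (e : rel T) (x : T) : {set T} :=
  [set y | (y == x) || e x y].

Definition is_clique (T : finType) (e : rel T) (C : {set T}) : bool :=
  [forall x in C, forall y in C, (x != y) ==> e x y].

Definition same_cnbhd (T : finType) (e : rel T) (C : {set T}) : bool :=
  [forall x in C, forall y in C, cnbhd e x == cnbhd e y].

Definition critical_clique (T : finType) (e : rel T) (C : {set T}) : bool :=
  [&& C != set0, is_clique e C, same_cnbhd e C &
      [forall D : {set T}, (C \proper D) ==> ~~ (is_clique e D && same_cnbhd e D)]].

Definition cc_vertex (T : finType) (e : rel T) :=
  {C : {set T} | critical_clique e C}.

Definition cc_adj (T : finType) (e : rel T) : rel (cc_vertex e) :=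
  fun C D => (C != D) && is_clique e (val C :|: val D).
Arguments cc_adj {T} e.
Arguments boxicity {T} e.

From Stdlib Require Import Reals ClassicalEpsilon.
From mathcomp Require Import all_boot.

Set Implicit Arguments.
Unset Strict Implicit.
Unset Printing Implicit Defensive.

(* The vertex sets of the critical cliques are exactly the classes of the
   relation "same closed neighbourhood", and two distinct classes are either
   completely joined or completely non-adjacent.  Hence a box representation of
   G induces one of CC(G) by giving each critical clique the box of any of its
   vertices, and conversely a representation of CC(G) induces one of G by
   giving each vertex the box of its critical clique: twin vertices are
   adjacent and receive identical, hence intersecting, boxes. *)

Section BoxRepTransport.

Variables (T1 T2 : finType) (e1 : rel T1) (e2 : rel T2) (f : T2 -> T1).

(* Vertices with the same image get the same box, so they must be adjacent. *)
Hypothesis e2_comap :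
  forall u v, u != v -> e2 u v = (f u == f v) || e1 (f u) (f v).

Lemma box_rep_comap t : box_rep e1 t -> box_rep e2 t.
Proof.
case=> a [b [le_ab rep_e1]].
exists (fun u => a (f u)), (fun u => b (f u)); split=> [u i|u v neq_uv].
  exact: le_ab.
rewrite e2_comap //; case: eqP => [<-|/eqP neq_f] /=; last exact: rep_e1.
split=> // _; exists (a (f u)) => i.
by split; split; [exact: Rle_refl | exact: le_ab | exact: Rle_refl | exact: le_ab].
Qed.

End BoxRepTransport.

Lemma box_repP (T : finType) (e : rel T) t :
  reflect (box_rep e t) (box_repb e t).
Proof. by rewrite /box_repb; case: excluded_middle_informative; constructor. Qed.

Lemma eq_boxicity (T1 T2 : finType) (e1 : rel T1) (e2 : rel T2) :
  (forall t, box_rep e1 t <-> box_rep e2 t) -> boxicity e1 = boxicity e2.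
Proof.
move=> eq_rep.
have eq_repb : box_repb e1 =1 box_repb e2.
  by move=> t; have [? ?] := eq_rep t; apply/box_repP/box_repP.
rewrite /boxicity.
case: excluded_middle_informative => [ex1|nex1];
  case: excluded_middle_informative => [ex2|nex2] //.
- exact: eq_ex_minn.
- by case: nex2; have [t] := ex1; exists t; rewrite -eq_repb.
- by case: nex1; have [t] := ex2; exists t; rewrite eq_repb.
Qed.

Section CriticalCliques.

Variables (T : finType) (e : rel T).

Lemma same_cnbhdP C x y :
  same_cnbhd e C -> x \in C -> y \in C -> cnbhd e x = cnbhd e y.
Proof.
by move=> /forallP/(_ x)/implyP H /H/forallP/(_ y)/implyP H' /H'/eqP.
Qed.

Lemma cliqueP C x y : is_clique e C -> x \in C -> y \in C -> x != y -> e x y.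
Proof.
by move=> /forallP/(_ x)/implyP H /H/forallP/(_ y)/implyP H' /H'/implyP.
Qed.

Lemma cnbhd_eq_adj x y : cnbhd e x = cnbhd e y -> x != y -> e x y.
Proof.
move=> eq_N neq_xy; have : y \in cnbhd e y by rewrite inE eqxx.
by rewrite -eq_N inE eq_sym (negbTE neq_xy).
Qed.

Lemma same_cnbhd_clique C : same_cnbhd e C -> is_clique e C.
Proof.
move=> sC; apply/forallP=> x; apply/implyP=> xC; apply/forallP=> y.
by apply/implyP=> yC; apply/implyP; apply/cnbhd_eq_adj/(same_cnbhdP sC).
Qed.

(* The union of two twin classes sharing a vertex is again a twin class, so
   maximality of [C] forbids [D] to stick out of it. *)
Lemma critical_clique_sub C D z :
  critical_clique e C -> critical_clique e D -> z \in C -> z \in D ->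
  D \subset C.
Proof.
case/and4P=> _ _ sC maxC /and4P[_ _ sD _] zC zD.
have sCD : same_cnbhd e (C :|: D).
  have N_z w : w \in C :|: D -> cnbhd e w = cnbhd e z.
    by rewrite inE => /orP[wC | wD]; [exact: same_cnbhdP sC wC zC
                                    | exact: same_cnbhdP sD wD zD].
  apply/forallP=> x; apply/implyP=> /N_z Nx.
  by apply/forallP=> y; apply/implyP=> /N_z Ny; rewrite Nx Ny.
have /implyP not_proper := forallP maxC (C :|: D).
have : ~~ (C \proper C :|: D).
  by apply/negP=> /not_proper; rewrite same_cnbhd_clique ?sCD.
by rewrite properE subsetUl negbK => /(subset_trans (subsetUr C D)).
Qed.

Lemma cc_vertex_eq (C D : cc_vertex e) z : z \in val C -> z \in val D -> C = D.
Proof.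
move=> zC zD; apply: val_inj; apply/eqP; rewrite eqEsubset.
by rewrite (critical_clique_sub (valP C) (valP D) zC zD)
           (critical_clique_sub (valP D) (valP C) zD zC).
Qed.

Lemma cc_vertex_disjoint (C D : cc_vertex e) x y :
  C != D -> x \in val C -> y \in val D -> x != y.
Proof.
move=> neq_CD xC yD; apply: contra neq_CD => /eqP eq_xy.
by apply/eqP/(cc_vertex_eq xC); rewrite eq_xy.
Qed.

Lemma cc_vertex_nonempty (C : cc_vertex e) : exists x, x \in val C.
Proof. by case/and4P: (valP C) => /set0Pn. Qed.

Definition cc_rep (C : cc_vertex e) : T := xchoose (cc_vertex_nonempty C).

Lemma cc_rep_mem C : cc_rep C \in val C.
Proof. exact: xchooseP. Qed.

Lemma cc_rep_inj : injective cc_rep.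
Proof.
move=> C D eq_rep; apply: (cc_vertex_eq (cc_rep_mem C)).
by rewrite eq_rep cc_rep_mem.
Qed.

Definition twins (u : T) : {set T} := [set y | cnbhd e y == cnbhd e u].

Lemma twins_critical u : critical_clique e (twins u).
Proof.
have s_twins : same_cnbhd e (twins u).
  apply/forallP=> x; apply/implyP; rewrite inE => /eqP ->.
  by apply/forallP=> y; apply/implyP; rewrite inE => /eqP ->.
apply/and4P; split=> //; first by apply/set0Pn; exists u; rewrite inE.
  exact: same_cnbhd_clique.
apply/forallP=> D; apply/implyP=> proper_D; apply/negP=> /andP[_ sD].
have uD : u \in D by apply: (subsetP (proper_sub proper_D)); rewrite inE.
have sub_D : D \subset twins u.
  by apply/subsetP=> y yD; rewrite inE (same_cnbhdP sD yD uD).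
by move: proper_D; rewrite properE sub_D andbF.
Qed.

Definition cc_of (u : T) : cc_vertex e := exist _ (twins u) (twins_critical u).

Lemma cc_of_mem u : u \in val (cc_of u).
Proof. by rewrite inE. Qed.

Hypothesis e_sym : symmetric e.

Lemma cc_adjE (C D : cc_vertex e) x y :
  C != D -> x \in val C -> y \in val D -> cc_adj e C D = e x y.
Proof.
move=> neq_CD xC yD; rewrite /cc_adj neq_CD /=.
case/and4P: (valP C) => _ cliqueC sC _; case/and4P: (valP D) => _ cliqueD sD _.
apply/idP/idP => [clique_CD | exy].
  apply: (cliqueP clique_CD); rewrite ?inE ?xC ?yD ?orbT //.
  exact: cc_vertex_disjoint neq_CD xC yD.
have in_cnbhdC a b : (a \in cnbhd e b) = (b \in cnbhd e a).
  by rewrite !inE eq_sym e_sym.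
have cross u v : u \in val C -> v \in val D -> e u v.
  move=> uC vD.
  have : y \in cnbhd e u by rewrite (same_cnbhdP sC uC xC) inE exy orbT.
  rewrite in_cnbhdC (same_cnbhdP sD yD vD) inE e_sym.
  by rewrite (negbTE (cc_vertex_disjoint neq_CD uC vD)).
apply/forallP=> u; apply/implyP=> uCD; apply/forallP=> v; apply/implyP=> vCD.
apply/implyP=> neq_uv; move: uCD vCD; rewrite !inE => /orP[uC | uD] /orP[vC | vD].
- exact: cliqueP cliqueC uC vC neq_uv.
- exact: cross.
- by rewrite e_sym cross.
- exact: cliqueP cliqueD uD vD neq_uv.
Qed.

Lemma cc_adj_rep (C D : cc_vertex e) : C != D ->
  cc_adj e C D = (cc_rep C == cc_rep D) || e (cc_rep C) (cc_rep D).
Proof.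
move=> neq_CD; rewrite (inj_eq cc_rep_inj) (negbTE neq_CD) /=.
exact: cc_adjE neq_CD (cc_rep_mem C) (cc_rep_mem D).
Qed.

Lemma adj_cc_of u v :
  u != v -> e u v = (cc_of u == cc_of v) || cc_adj e (cc_of u) (cc_of v).
Proof.
move=> neq_uv; have [eq_cc | neq_cc] /= := eqVneq (cc_of u) (cc_of v).
  by apply: cnbhd_eq_adj neq_uv; move: (cc_of_mem u); rewrite eq_cc inE => /eqP.
exact/esym/cc_adjE/cc_of_mem/cc_of_mem.
Qed.

End CriticalCliques.

Theorem lemma3 (T : finType) (e : rel T)
  (e_sym : symmetric e) (e_irr : irreflexive e) :
  boxicity e = boxicity (cc_adj e).
Proof.
apply: eq_boxicity => t; split.
- exact/box_rep_comap/cc_adj_rep.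
- exact/box_rep_comap/adj_cc_of.
Qed.
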